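(* Let $f:G\to H$ be a group homomorphism. Then $\mathrm{sec}(f)\leq \sigma(\mathfrak{L}(f))$, and equality holds whenever the poset $\mathfrak{L}(f)$ is Noetherian (for example, when $H$ is finite or, more generally, Noetherian).
   Context: For a subgroup $L\le H$, a local section of $f$ on $L$ is a homomorphism $s:L\to G$ with $f\circ s=\mathrm{incl}_L$. The sectional number $\mathrm{sec}(f)$ is the least positive integer $m$ such that there exist proper subgroups $H_1,\ldots,H_m$ of $H$ with $H=H_1\cup\cdots\cup H_m$ and such that $f$ admits a local section on each $H_i$; $\mathrm{sec}(f)=\infty$ if no such $m$ exists. $\mathfrak{L}(f)$ is the poset, ordered by inclusion, of all proper subgroups of $H$ on which $f$ admits a local section. For a poset $P$ whose elements are subsets of a fixed set $X$ (here $X=H$), $\sigma(P)$ is the least positive integer $m$ such that there exist maximal elements $M_1,\ldots,M_m$ of $P$ with $X=M_1\cup\cdots\cup M_m$ ($\infty$ if none). A poset is Noetherian if every ascending chain $x_1\le x_2\le\cdots$ eventually stabilizes. *)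

From mathcomp Require Import all_boot.
From Stdlib Require Import ClassicalDescription.
From mathcomp Require Import all_boot.

Set Implicit Arguments.
Unset Strict Implicit.
Unset Printing Implicit Defensive.

Record group := Group {
  gcar :> Type;
  gmul : gcar -> gcar -> gcar;
  gone : gcar;
  ginv : gcar -> gcar;
  gmulA : forall x y z, gmul x (gmul y z) = gmul (gmul x y) z;
  gmul1 : forall x, gmul gone x = x;
  gmulg1 : forall x, gmul x gone = x;
  gmulV : forall x, gmul (ginv x) x = gone;
  gmulgV : forall x, gmul x (ginv x) = gone
}.

Arguments gmul {g} _ _.
Arguments gone {g}.
Arguments ginv {g} _.

Definition is_hom (G H : group) (f : G -> H) : Prop :=
  forall x y : G, f (gmul x y) = gmul (f x) (f y).

Definition subset (X : Type) (A B : X -> Prop) : Prop := forall x, A x -> B x.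

Definition is_subgroup (H : group) (L : H -> Prop) : Prop :=
  [/\ L gone, (forall x y, L x -> L y -> L (gmul x y)) & (forall x, L x -> L (ginv x))].

Definition is_proper_subgroup (H : group) (L : H -> Prop) : Prop :=
  is_subgroup L /\ exists x, ~ L x.

(* A local section of f on the subgroup L: a homomorphism s : L -> G
   (L viewed as the subtype {x | L x}, with the induced multiplication)
   such that f (s u) = u for all u in L. *)
Definition local_section (G H : group) (f : G -> H) (L : H -> Prop)
    (s : {x : H | L x} -> G) : Prop :=
  (forall u v w : {x : H | L x},
      proj1_sig w = gmul (proj1_sig u) (proj1_sig v) -> s w = gmul (s u) (s v))
  /\ (forall u, f (s u) = proj1_sig u).

Definition has_local_section (G H : group) (f : G -> H) (L : H -> Prop) : Prop :=
  exists s, @local_section G H f L s.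

(* Extended naturals N u {oo}: None stands for oo. *)
Definition le_ext (a b : option nat) : Prop :=
  match b with
  | None => True
  | Some n => match a with Some m => m <= n | None => False end
  end.

Definition boolP_of (P : nat -> Prop) : pred nat :=
  fun m => if excluded_middle_informative (P m) then true else false.

Lemma boolP_ofP (P : nat -> Prop) m : P m -> boolP_of P m.
Proof. by rewrite /boolP_of; case: excluded_middle_informative. Qed.

Definition ext_min (P : nat -> Prop) : option nat :=
  match excluded_middle_informative (exists m, P m) with
  | left h => Some (ex_minn (let: ex_intro m hm := h in ex_intro _ m (boolP_ofP hm)))
  | right _ => None
  end.

Definition sec_cover (G H : group) (f : G -> H) (m : nat) : Prop :=
  0 < m /\ exists Hs : 'I_m -> (H -> Prop),
    (forall i, is_proper_subgroup (Hs i) /\ has_local_section f (Hs i))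
    /\ (forall x : H, exists i, Hs i x).

Definition sec (G H : group) (f : G -> H) : option nat := ext_min (sec_cover f).

Definition Lf (G H : group) (f : G -> H) : (H -> Prop) -> Prop :=
  fun L => is_proper_subgroup L /\ has_local_section f L.

Definition maximal_in (X : Type) (P : (X -> Prop) -> Prop) (M : X -> Prop) : Prop :=
  P M /\ forall N, P N -> subset M N -> subset N M.

Definition sigma_cover (X : Type) (P : (X -> Prop) -> Prop) (m : nat) : Prop :=
  0 < m /\ exists Ms : 'I_m -> (X -> Prop),
    (forall i, maximal_in P (Ms i)) /\ (forall x : X, exists i, Ms i x).

Definition sigma (X : Type) (P : (X -> Prop) -> Prop) : option nat :=
  ext_min (sigma_cover P).

Definition noetherian (X : Type) (P : (X -> Prop) -> Prop) : Prop :=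
  forall c : nat -> (X -> Prop),
    (forall n, P (c n)) -> (forall n, subset (c n) (c n.+1)) ->
    exists N, forall n, N <= n -> subset (c n) (c N).

(* A sectional cover of H is exactly a cover of H by members of L(f), while sigma
   counts covers by maximal members of L(f); hence sec(f) <= sigma(L(f)).
   Conversely, in a Noetherian poset every element lies below a maximal one
   (iterate strict enlargement; the chain must stabilise), so each piece of a
   sectional cover can be enlarged to a maximal member of L(f) without changing
   the number of pieces. *)
From Pilot Require Import Defs.
From mathcomp Require Import all_boot.
From Stdlib Require Import Classical ClassicalDescription IndefiniteDescription.

Set Implicit Arguments.
Unset Strict Implicit.
Unset Printing Implicit Defensive.

Lemma ext_minP (P : nat -> Prop) : (exists m, P m) ->
  exists k, [/\ ext_min P = Some k, P k & forall m, P m -> k <= m].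
Proof.
rewrite /ext_min; case: excluded_middle_informative => // -[m Pm] _ /=.
case: ex_minnP => k Pk kmin; exists k; split=> //.
  by move: Pk; rewrite /boolP_of; case: excluded_middle_informative.
by move=> j /boolP_ofP; apply: kmin.
Qed.

Lemma ext_minN (P : nat -> Prop) : ~ (exists m, P m) -> ext_min P = None.
Proof. by rewrite /ext_min; case: excluded_middle_informative. Qed.

Lemma le_ext_min (P Q : nat -> Prop) :
  (forall m, Q m -> P m) -> le_ext (ext_min P) (ext_min Q).
Proof.
move=> QP; have [[m Qm]|noQ] := classic (exists m, Q m); last first.
  by rewrite (ext_minN noQ).
have [k [-> Qk _]] := ext_minP (ex_intro _ m Qm).
by have [j [-> _ jmin]] := ext_minP (ex_intro _ k (QP k Qk)); exact/jmin/QP.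
Qed.

Lemma le_ext_anti (a b : option nat) : le_ext a b -> le_ext b a -> a = b.
Proof.
by case: a b => [m|] [n|] //= mn nm; congr Some; apply/eqP; rewrite eqn_leq mn.
Qed.

Lemma eq_ext_min (P Q : nat -> Prop) :
  (forall m, P m <-> Q m) -> ext_min P = ext_min Q.
Proof. by move=> PQ; apply: le_ext_anti; apply: le_ext_min => m /PQ. Qed.

Section Covers.
Variable X : Type.

Definition cover_by (P : (X -> Prop) -> Prop) (m : nat) : Prop :=
  0 < m /\ exists Ms : 'I_m -> (X -> Prop),
    (forall i, P (Ms i)) /\ (forall x : X, exists i, Ms i x).

Definition covering_number (P : (X -> Prop) -> Prop) : option nat :=
  ext_min (cover_by P).

Lemma sigmaE (P : (X -> Prop) -> Prop) :
  sigma P = covering_number (maximal_in P).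
Proof. by []. Qed.

Lemma maximal_in_mem (P : (X -> Prop) -> Prop) M : maximal_in P M -> P M.
Proof. by case. Qed.

Lemma noetherian_maximal_above (P : (X -> Prop) -> Prop) L :
  noetherian P -> P L -> exists M, maximal_in P M /\ Defs.subset L M.
Proof.
move=> noethP PL; apply: NNPP => noM.
have strict M : exists N, P M -> Defs.subset L M ->
    [/\ P N, Defs.subset M N & ~ Defs.subset N M].
  have [[PM LM]|notPLM] := classic (P M /\ Defs.subset L M); last first.
    by exists M => PM LM; case: notPLM.
  apply: NNPP => noN; apply: noM; exists M; split=> //; split=> // N PN MN.
  by apply: NNPP => NM; apply: noN; exists N.
have [next nextP] := functional_choice _ strict.
pose c n := iter n next L.
have chainP n : P (c n) /\ Defs.subset L (c n).
  elim: n => [|n [Pc Lc]]; first by split=> // x.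
  by have [Pn cn _] := nextP _ Pc Lc; split=> // x /Lc /cn.
have [N stable] := noethP c (fun n => (chainP n).1)
  (fun n => let: And3 _ cn _ := nextP _ (chainP n).1 (chainP n).2 in cn).
have [_ _] := nextP _ (chainP N).1 (chainP N).2; apply.
exact: (stable N.+1).
Qed.

Lemma sub_cover_by (P Q : (X -> Prop) -> Prop) m :
  (forall M, P M -> Q M) -> cover_by P m -> cover_by Q m.
Proof.
move=> PQ [m0 [Ms [PMs cov]]]; split=> //.
by exists Ms; split=> // i; apply/PQ/PMs.
Qed.

Lemma cover_by_maximal (P : (X -> Prop) -> Prop) m :
  noetherian P -> cover_by P m -> cover_by (maximal_in P) m.
Proof.
move=> noethP [m0 [Ms [PMs cov]]]; split=> //.
have [Mx MxP] := functional_choice _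
  (fun i => noetherian_maximal_above noethP (PMs i)).
exists Mx; split=> [i|x]; first exact: (MxP i).1.
by have [i Msx] := cov x; exists i; apply: (MxP i).2.
Qed.

Lemma covering_number_le_sigma (P : (X -> Prop) -> Prop) :
  le_ext (covering_number P) (sigma P).
Proof.
rewrite sigmaE; apply: le_ext_min => m.
by apply: sub_cover_by; apply: maximal_in_mem.
Qed.

Lemma noetherian_sigma (P : (X -> Prop) -> Prop) :
  noetherian P -> sigma P = covering_number P.
Proof.
move=> noethP; rewrite sigmaE; apply: eq_ext_min => m; split.
  by apply: sub_cover_by; apply: maximal_in_mem.
exact: cover_by_maximal.
Qed.

End Covers.

Lemma secE (G H : group) (f : G -> H) : sec f = covering_number (Lf f).
Proof. by []. Qed.

Theorem theorem3p12 (G H : group) (f : G -> H) (hf : is_hom f) :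
  le_ext (sec f) (sigma (Lf f)) /\
  (noetherian (Lf f) -> sec f = sigma (Lf f)).
Proof.
rewrite secE; split; first exact: covering_number_le_sigma.
by move=> /noetherian_sigma ->.
Qed.
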